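(* Let $r\in\mathcal R$ be a universal distance matrix and let $q$ be a finite distance matrix of order $N$ such that for some $n<N$, $r_{i,j}=q_{i,j}$ for $i,j=1,\dots,n$. Put $i_k=k$ for $k=1,\dots,n$. Then for every $\epsilon>0$ there exist natural numbers $i_{n+1},\dots,i_N$ such that $\max_{k,s=1,\dots,N}|r_{i_k,i_s}-q_{k,s}|<\epsilon$. Conversely, if an infinite proper distance matrix $r$ has this property for every finite distance matrix $q$ (whose upper-left $n\times n$ corner agrees with that of $r$, for some $n$) and every $\epsilon>0$, then $r$ is universal.
   Context: $\mathcal R$ is the set of infinite real matrices $r=\{r_{i,j}\}_{i,j\ge1}$ with $r_{i,i}=0$, $r_{i,j}\ge0$, $r_{i,j}=r_{j,i}$, $r_{i,k}+r_{k,j}\ge r_{i,j}$; a finite distance matrix of order $N$ is an $N\times N$ matrix with the same properties; $p_n(r)$ is the upper-left $n\times n$ corner. $r$ is proper if $r_{i,j}>0$ for $i\neq j$. For a distance matrix $q$ of order $n$, $A(q)=\{a\in\mathbb R^n:|a_i-a_j|\le q_{i,j}\le a_i+a_j\ \forall i,j\}$. A proper $r\in\mathcal R$ is universal if for every $n$, every $a\in A(p_n(r))$ and every $\epsilon>0$ there is $m\in\mathbb N$ with $\max_{1\le i\le n}|r_{i,m}-a_i|<\epsilon$. *)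

(* Convention: indices are 0-based; the paper's index i>=1 is our i-1.
   An infinite matrix is r : nat -> nat -> R; a finite matrix of order N is
   q : nat -> nat -> R of which only the entries with indices < N matter. *)
From Stdlib Require Import Reals.
Open Scope R_scope.

Definition is_dist_fin (N : nat) (q : nat -> nat -> R) : Prop :=
  (forall i, (i < N)%nat -> q i i = 0) /\
  (forall i j, (i < N)%nat -> (j < N)%nat -> 0 <= q i j) /\
  (forall i j, (i < N)%nat -> (j < N)%nat -> q i j = q j i) /\
  (forall i j k, (i < N)%nat -> (j < N)%nat -> (k < N)%nat ->
     q i k + q k j >= q i j).

Definition in_calR (r : nat -> nat -> R) : Prop :=
  (forall i, r i i = 0) /\
  (forall i j, 0 <= r i j) /\
  (forall i j, r i j = r j i) /\
  (forall i j k, r i k + r k j >= r i j).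

Definition proper (r : nat -> nat -> R) : Prop :=
  forall i j, i <> j -> r i j > 0.

(* a \in A(q) for a distance matrix q of order n (vector a given by its
   first n coordinates) *)
Definition inA (n : nat) (q : nat -> nat -> R) (a : nat -> R) : Prop :=
  forall i j, (i < n)%nat -> (j < n)%nat ->
    Rabs (a i - a j) <= q i j /\ q i j <= a i + a j.

(* universality; p_n(r) is r restricted to indices < n *)
Definition universal (r : nat -> nat -> R) : Prop :=
  in_calR r /\ proper r /\
  forall (n : nat) (a : nat -> R), inA n r a ->
    forall eps, eps > 0 ->
      exists m : nat, forall i, (i < n)%nat -> Rabs (r i m - a i) < eps.

Definition extension_property (r : nat -> nat -> R) : Prop :=
  forall (N n : nat) (q : nat -> nat -> R),
    (n < N)%nat -> is_dist_fin N q ->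
    (forall i j, (i < n)%nat -> (j < n)%nat -> r i j = q i j) ->
    forall eps, eps > 0 ->
      exists idx : nat -> nat,
        (forall k, (k < n)%nat -> idx k = k) /\
        (forall k s, (k < N)%nat -> (s < N)%nat ->
           Rabs (r (idx k) (idx s) - q k s) < eps).

(* Forward direction: build the indices i_{n+1}, ..., i_N one at a time.  If
   i_1, ..., i_K already realise q on its first K points up to eps/2, the
   Katetov function a_j = min_k (q_{k,K+1} + eps/2 + r_{i_k,j}) belongs to
   A(p_M(r)) for every M, and a_{i_k} lies within eps/2 of q_{k,K+1}; a point m
   given by universality for a then serves as i_{K+1}.
   Converse: a vector a in A(p_n(r)) is precisely the last row of a distance
   matrix of order n+1 extending p_n(r), and an approximate realisation of that
   matrix with i_k = k for k <= n gives the point required by universality. *)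
From Stdlib Require Import Reals Lra Lia.
Open Scope R_scope.

Fixpoint min_upto (K : nat) (g : nat -> R) : R :=
  match K with
  | O => g O
  | S K' => Rmin (min_upto K' g) (g (S K'))
  end.

Lemma min_upto_le K g k : (k <= K)%nat -> min_upto K g <= g k.
Proof.
  revert k; induction K as [|K IHK]; intros k Hk; simpl.
  - replace k with 0%nat by lia; lra.
  - destruct (Nat.eq_dec k (S K)) as [->|Hne].
    + apply Rmin_r.
    + eapply Rle_trans; [apply Rmin_l | apply IHK; lia].
Qed.

Lemma min_upto_attained K g : exists k, (k <= K)%nat /\ min_upto K g = g k.
Proof.
  induction K as [|K [k [Hk Hmin]]]; simpl.
  - exists 0%nat; split; auto.
  - unfold Rmin; destruct (Rle_dec (min_upto K g) (g (S K))).
    + exists k; split; auto.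
    + exists (S K); split; auto.
Qed.

Lemma finite_range_bounded (f : nat -> nat) K :
  exists M, forall k, (k < K)%nat -> (f k < M)%nat.
Proof.
  induction K as [|K [M HM]].
  - exists 0%nat; intros; lia.
  - exists (Nat.max M (S (f K))); intros k Hk.
    destruct (Nat.eq_dec k K) as [->|Hne]; [lia|].
    specialize (HM k ltac:(lia)); lia.
Qed.

Definition katetov (r : nat -> nat -> R) (K : nat) (p : nat -> nat)
  (b : nat -> R) (j : nat) : R :=
  min_upto K (fun l => b l + r (p l) j).

Lemma katetov_lipschitz r K p b i j :
  in_calR r -> katetov r K p b i <= katetov r K p b j + r i j.
Proof.
  intros (_ & _ & r_sym & r_tri).
  destruct (min_upto_attained K (fun l => b l + r (p l) j)) as [l [Hl Hj]].
  unfold katetov; rewrite Hj.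
  pose proof (min_upto_le K (fun l => b l + r (p l) i) l Hl).
  pose proof (r_tri (p l) i j); rewrite (r_sym j i) in *; simpl in *; lra.
Qed.

Lemma katetov_inA r K p b M :
  in_calR r ->
  (forall l l', (l <= K)%nat -> (l' <= K)%nat -> r (p l) (p l') <= b l + b l') ->
  inA M r (katetov r K p b).
Proof.
  intros Hr Hb i j _ _.
  pose proof (katetov_lipschitz r K p b i j Hr).
  pose proof (katetov_lipschitz r K p b j i Hr).
  destruct Hr as (_ & _ & r_sym & r_tri).
  split.
  - rewrite (r_sym j i) in *; apply Rabs_le; lra.
  - destruct (min_upto_attained K (fun l => b l + r (p l) i)) as [l [Hl Hi]].
    destruct (min_upto_attained K (fun l => b l + r (p l) j)) as [l' [Hl' Hj]].
    unfold katetov; rewrite Hi, Hj.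
    pose proof (Hb l l' Hl Hl').
    pose proof (r_tri i j (p l)); pose proof (r_tri (p l) j (p l')).
    pose proof (r_sym i (p l)); lra.
Qed.

Lemma katetov_at_point r K p b k :
  in_calR r -> (k <= K)%nat -> katetov r K p b (p k) <= b k.
Proof.
  intros (r_diag & _) Hk.
  pose proof (min_upto_le K (fun l => b l + r (p l) (p k)) k Hk) as Hle.
  simpl in Hle; rewrite r_diag in Hle; unfold katetov; lra.
Qed.

Definition approx_embedding r q n K eps (idx : nat -> nat) : Prop :=
  (forall k, (k < n)%nat -> idx k = k) /\
  (forall k s, (k < K)%nat -> (s < K)%nat ->
     Rabs (r (idx k) (idx s) - q k s) < eps).

Definition approx_embeddable r q n K : Prop :=
  forall eps, eps > 0 -> exists idx, approx_embedding r q n K eps idx.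

Lemma approx_embedding_weaken r q n K eps eps' idx :
  eps <= eps' -> approx_embedding r q n K eps idx ->
  approx_embedding r q n K eps' idx.
Proof.
  intros Hle [Hfix Happ]; split; [exact Hfix|].
  intros k s Hk Hs; specialize (Happ k s Hk Hs); lra.
Qed.

(* For n = 0 the induction starts from one point rather than none, because
   the Katetov minimum needs a nonempty family. *)
Lemma approx_embeddable_initial r q n N :
  in_calR r -> is_dist_fin N q -> (n < N)%nat ->
  (forall i j, (i < n)%nat -> (j < n)%nat -> r i j = q i j) ->
  approx_embeddable r q n (Nat.max n 1).
Proof.
  intros (r_diag & _) (q_diag & _) HnN Hagree eps Heps.
  exists (fun k => k); split; [reflexivity|].
  intros k s Hk Hs.
  assert (Heq : r k s = q k s).
  { destruct n as [|n]; [|apply Hagree; lia].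
    replace k with 0%nat by lia; replace s with 0%nat by lia.
    rewrite r_diag, q_diag by lia; reflexivity. }
  rewrite Heq, Rminus_diag, Rabs_R0; lra.
Qed.

Lemma approx_embedding_extend r q n N K eps idx m :
  in_calR r -> is_dist_fin N q -> (S K < N)%nat -> (n <= S K)%nat -> eps > 0 ->
  approx_embedding r q n (S K) eps idx ->
  (forall k, (k <= K)%nat -> Rabs (r (idx k) m - q k (S K)) < eps) ->
  approx_embedding r q n (S (S K)) eps
    (fun k => if Nat.eqb k (S K) then m else idx k).
Proof.
  intros (r_diag & _ & r_sym & _) (q_diag & _ & q_sym & _) HKN HnK
    Heps [Hfix Happ] Hnew.
  split.
  - intros k Hk; destruct (Nat.eqb_spec k (S K)); [lia | auto].
  - intros k s Hk Hs.
    destruct (Nat.eqb_spec k (S K)) as [->|Hk'], (Nat.eqb_spec s (S K)) as [->|Hs'].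
    + rewrite r_diag, q_diag, Rminus_diag, Rabs_R0 by lia; exact Heps.
    + rewrite r_sym, (q_sym (S K) s) by lia; apply Hnew; lia.
    + apply Hnew; lia.
    + apply Happ; lia.
Qed.

Lemma approx_new_point r q n N K eps idx :
  universal r -> is_dist_fin N q -> (S K < N)%nat -> eps > 0 ->
  approx_embedding r q n (S K) (eps / 2) idx ->
  exists m, forall k, (k <= K)%nat -> Rabs (r (idx k) m - q k (S K)) < eps.
Proof.
  intros (Hr & _ & Huniv) Hq HKN Heps [_ Happ].
  destruct Hq as (_ & _ & q_sym & q_tri).
  set (b := fun l => q l (S K) + eps / 2).
  assert (Hb : forall l l', (l <= K)%nat -> (l' <= K)%nat ->
                 r (idx l) (idx l') <= b l + b l').
  { intros l l' Hl Hl'.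
    pose proof (Happ l l' ltac:(lia) ltac:(lia)) as Hll'; apply Rabs_def2 in Hll'.
    pose proof (q_tri l l' (S K) ltac:(lia) ltac:(lia) ltac:(lia)).
    rewrite (q_sym (S K) l') in * by lia; unfold b; lra. }
  destruct (finite_range_bounded idx (S K)) as [M HM].
  destruct (Huniv M (katetov r K idx b) (katetov_inA r K idx b M Hr Hb) (eps / 2))
    as [m Hm]; [lra|].
  exists m; intros k Hk.
  specialize (Hm (idx k) (HM k ltac:(lia))); apply Rabs_def2 in Hm.
  pose proof (katetov_at_point r K idx b k Hr Hk) as Hup.
  assert (Hlow : q k (S K) <= katetov r K idx b (idx k)).
  { destruct (min_upto_attained K (fun l => b l + r (idx l) (idx k)))
      as [l [Hl Hmin]].
    unfold katetov; rewrite Hmin.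
    pose proof (Happ l k ltac:(lia) ltac:(lia)) as Hlk; apply Rabs_def2 in Hlk.
    pose proof (q_tri k (S K) l ltac:(lia) ltac:(lia) ltac:(lia)).
    rewrite (q_sym k l) in * by lia; unfold b; lra. }
  change (b k) with (q k (S K) + eps / 2) in Hup; apply Rabs_def1; lra.
Qed.

Lemma approx_embeddable_succ r q n N K :
  universal r -> is_dist_fin N q -> (0 < K)%nat -> (K < N)%nat -> (n <= K)%nat ->
  approx_embeddable r q n K -> approx_embeddable r q n (S K).
Proof.
  destruct K as [|K]; [lia|].
  intros Hu Hq _ HKN HnK Hemb eps Heps.
  destruct (Hemb (eps / 2)) as [idx Hidx]; [lra|].
  destruct (approx_new_point r q n N K eps idx Hu Hq HKN Heps Hidx) as [m Hm].
  exists (fun k => if Nat.eqb k (S K) then m else idx k).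
  apply (approx_embedding_extend r q n N); try assumption.
  - apply Hu.
  - apply approx_embedding_weaken with (eps / 2); [lra | exact Hidx].
Qed.

Lemma universal_extension_property r : universal r -> extension_property r.
Proof.
  intros Hu N n q HnN Hq Hagree.
  assert (Hall : forall K, (Nat.max n 1 <= K <= N)%nat -> approx_embeddable r q n K).
  { induction K as [|K IHK]; intros HK; [lia|].
    destruct (Nat.eq_dec (S K) (Nat.max n 1)) as [->|Hne].
    - exact (approx_embeddable_initial r q n N (proj1 Hu) Hq HnN Hagree).
    - apply (approx_embeddable_succ r q n N); try assumption; try lia.
      apply IHK; lia. }
  apply Hall; lia.
Qed.

Definition adjoin_point (r : nat -> nat -> R) (n : nat) (a : nat -> R) i j : R :=
  if Nat.ltb i n then (if Nat.ltb j n then r i j else a i)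
  else (if Nat.ltb j n then a j else 0).

Lemma adjoin_point_is_dist r n a :
  in_calR r -> inA n r a -> is_dist_fin (S n) (adjoin_point r n a).
Proof.
  intros (r_diag & r_nneg & r_sym & r_tri) Ha.
  assert (a_nneg : forall i, (i < n)%nat -> 0 <= a i).
  { intros i Hi; destruct (Ha i i Hi Hi) as [_ Hii]; rewrite r_diag in Hii; lra. }
  assert (a_lip : forall i j, (i < n)%nat -> (j < n)%nat -> a i <= a j + r i j).
  { intros i j Hi Hj; destruct (Ha i j Hi Hj) as [Hd _].
    pose proof (Rle_abs (a i - a j)); lra. }
  assert (a_sum : forall i j, (i < n)%nat -> (j < n)%nat -> r i j <= a i + a j).
  { intros i j Hi Hj; apply (Ha i j Hi Hj). }
  unfold adjoin_point; split; [|split; [|split]].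
  - intros i _; destruct (Nat.ltb_spec i n); auto.
  - intros i j _ _; destruct (Nat.ltb_spec i n), (Nat.ltb_spec j n); auto; lra.
  - intros i j _ _; destruct (Nat.ltb_spec i n), (Nat.ltb_spec j n); auto.
  - intros i j k Hi Hj Hk; apply Rle_ge.
    destruct (Nat.ltb_spec i n), (Nat.ltb_spec j n), (Nat.ltb_spec k n).
    + apply Rge_le, r_tri.
    + apply a_sum; assumption.
    + pose proof (a_lip i k ltac:(assumption) ltac:(assumption)); lra.
    + lra.
    + pose proof (a_lip j k ltac:(assumption) ltac:(assumption)).
      pose proof (r_sym k j); lra.
    + lra.
    + pose proof (a_nneg k ltac:(assumption)); lra.
    + lra.
Qed.

Lemma extension_property_universal r :
  in_calR r -> proper r -> extension_property r -> universal r.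
Proof.
  intros Hr Hp Hext; split; [exact Hr | split; [exact Hp|]].
  intros n a Ha eps Heps.
  assert (Hagree : forall i j, (i < n)%nat -> (j < n)%nat ->
                     r i j = adjoin_point r n a i j).
  { intros i j Hi Hj; unfold adjoin_point.
    destruct (Nat.ltb_spec i n), (Nat.ltb_spec j n); auto; lia. }
  destruct (Hext (S n) n (adjoin_point r n a) (Nat.lt_succ_diag_r n)
              (adjoin_point_is_dist r n a Hr Ha) Hagree eps Heps)
    as [idx [Hfix Happ]].
  exists (idx n); intros i Hi.
  specialize (Happ i n ltac:(lia) ltac:(lia)); rewrite Hfix in Happ by exact Hi.
  unfold adjoin_point in Happ.
  destruct (Nat.ltb_spec i n), (Nat.ltb_spec n n); [lia | exact Happ | lia | lia].
Qed.

Theorem corollary2 :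
  (forall r : nat -> nat -> R, universal r -> extension_property r) /\
  (forall r : nat -> nat -> R,
     in_calR r -> proper r -> extension_property r -> universal r).
Proof.
  split.
  - exact universal_extension_property.
  - exact extension_property_universal.
Qed.
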